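(* Let $n\geq 6$ and $a\geq 2$ be integers with $n\equiv a \pmod 2$, and let $k=\frac{n-a-2}{2}\geq 1$. Let $K_{2,a}\bullet F_k$ be the graph obtained by identifying a vertex of $K_{2,a}$ belonging to the part of size $a$ with the vertex of $F_k$ that is adjacent to every other vertex of $F_k$, and let $K_{2,a}* F_k$ be the graph obtained by identifying a vertex of $K_{2,a}$ belonging to the part of size $2$ with the vertex of $F_k$ that is adjacent to every other vertex of $F_k$. Then $$\rho(K_{2,a}\bullet F_{k})< \sqrt{2n-4}\quad\text{and}\quad \rho(K_{2,a} * F_{k})< \sqrt{2n-4}.$$
   Context: All graphs are simple and undirected. $K_{2,a}$ is the complete bipartite graph with parts of sizes $2$ and $a$. The friendship graph $F_k$ is the graph consisting of $k$ edge-disjoint triangles that all share a single common vertex (the vertex adjacent to all others). $\rho(G)$ denotes the spectral radius (largest adjacency eigenvalue) of $G$. *)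

From HB Require Import structures.
From mathcomp Require Import all_boot all_order all_algebra.
From mathcomp Require Import all_classical all_reals.
Set Implicit Arguments. Unset Strict Implicit. Unset Printing Implicit Defensive.
Import Order.TTheory GRing.Theory Num.Theory.
Local Open Scope classical_set_scope.
Local Open Scope ring_scope.

(* Vertex labelling (natural numbers, n = a + 2k + 2 vertices 0..n-1):
   - 0, 1            : the part of size 2 of K_{2,a}
   - 2, ..., a+1     : the part of size a of K_{2,a}
   - a+2, ..., a+2k+1: the non-central vertices of F_k, where the triangles
                       are {c, a+2+2t, a+3+2t} for t < k,
   and c is the vertex of K_{2,a} identified with the centre of F_k. *)

Definition K2a_arc (a : nat) (i j : nat) : bool :=
  ((i < 2) && (2 <= j < a + 2))%N.

Definition Fk_arc (a k c : nat) (i j : nat) : bool :=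
  [|| (i == c) && (a + 2 <= j < a + 2 * k + 2)%N
    | [&& (a + 2 <= i < a + 2 * k + 2)%N, (a + 2 <= j < a + 2 * k + 2)%N,
          i != j & ((i - (a + 2))./2 == (j - (a + 2))./2)%N] ].

Definition glued_edge (a k c : nat) (i j : nat) : bool :=
  [|| K2a_arc a i j, K2a_arc a j i, Fk_arc a k c i j | Fk_arc a k c j i].

(* K_{2,a} • F_k : centre of F_k identified with vertex 2 (part of size a) *)
Definition bullet_edge (a k : nat) := glued_edge a k 2.
(* K_{2,a} * F_k : centre of F_k identified with vertex 0 (part of size 2) *)
Definition star_edge (a k : nat) := glued_edge a k 0.

Definition adj_mx (R : nzRingType) (n : nat) (e : nat -> nat -> bool) : 'M[R]_n :=
  \matrix_(i < n, j < n) (e (nat_of_ord i) (nat_of_ord j))%:R.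

Definition spectral_radius (R : realType) (n : nat) (A : 'M[R]_n) : R :=
  sup [set x : R | eigenvalue A x].

(* A positive vector [w] with [(w A)_j < s w_j] for all [j] bounds every real
   eigenvalue of a nonnegative matrix [A] by [max_j (w A)_j / w_j < s]
   (Collatz-Wielandt).  For both graphs take [w] constant on four vertex classes:
   the part of size 2, the part of size [a] and the leaves of [F_k], with the
   glued vertex split off into a class of its own.  This partition is equitable,
   so [w A] is read off the 4x4 quotient matrix, and with [s^2 = 2n - 4 = 2a + 4k]
   the four strict inequalities only need [a >= 2], [k >= 1] and [s > 2]. *)

From HB Require Import structures.
From mathcomp Require Import all_boot all_order all_algebra.
From mathcomp Require Import all_classical all_reals.
From mathcomp Require Import zify.
From mathcomp.algebra_tactics Require Import lra.
Set Implicit Arguments. Unset Strict Implicit. Unset Printing Implicit Defensive.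
Import Order.TTheory GRing.Theory Num.Theory.
Local Open Scope ring_scope.

Lemma eigenvalue_le_subinvariant (R : realFieldType) n (A : 'M[R]_n)
    (w : 'I_n -> R) (mu l : R) :
  (forall i j, 0 <= A i j) -> (forall i, 0 < w i) ->
  (forall j, \sum_i w i * A i j <= mu * w j) -> eigenvalue A l -> l <= mu.
Proof.
move=> A_ge0 w_gt0 subinv /eigenvalueP [v vA v_neq0].
have [j0 vj0_neq0] : exists j, v 0 j != 0.
  apply/existsP; apply: contraNT v_neq0; rewrite negb_exists => /forallP v0.
  by apply/eqP/rowP => j; rewrite mxE; apply/eqP/negPn.
have [j _ j_max] := arg_maxP (fun j => `|v 0 j| / w j) (isT : predT j0).
set r := `|v 0 j| / w j in j_max.
have r_gt0 : 0 < r.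
  by apply: lt_le_trans (j_max j0 isT); rewrite divr_gt0 ?normr_gt0.
have vi_le i : `|v 0 i| <= r * w i.
  by rewrite -ler_pdivrMr ?w_gt0 //; exact: j_max.
have vj_gt0 : 0 < `|v 0 j|.
  by move: r_gt0; rewrite /r pmulr_lgt0 // invr_gt0.
suff : `|l| * `|v 0 j| <= mu * `|v 0 j|.
  by rewrite ler_pM2r // => /(le_trans (ler_norm l)).
rewrite -normrM.
have -> : l * v 0 j = \sum_i v 0 i * A i j.
  by have := congr1 (fun M : 'rV[R]_n => M 0 j) vA; rewrite !mxE => <-.
apply: le_trans (ler_norm_sum _ _ _) _.
apply: (@le_trans _ _ (\sum_i r * (w i * A i j))).
  by apply: ler_sum => i _; rewrite normrM (ger0_norm (A_ge0 i j)) mulrA ler_wpM2r.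
rewrite -mulr_sumr (le_trans (ler_wpM2l (ltW r_gt0) (subinv j))) //.
by rewrite /r mulrCA divfK ?gt_eqF.
Qed.

Lemma spectral_radius_lt_subinvariant (R : realType) n (A : 'M[R]_n)
    (w : 'I_n -> R) (s : R) :
  0 < s -> (forall i j, 0 <= A i j) -> (forall i, 0 < w i) ->
  (forall j, \sum_i w i * A i j < s * w j) -> spectral_radius A < s.
Proof.
move=> s_gt0 A_ge0 w_gt0 subinv.
(* [0 < s] is needed when [A] has no real eigenvalue: then [sup] returns [0]. *)
pose mu := \big[Num.max/0]_j ((\sum_i w i * A i j) / w j).
have mu_lt : mu < s.
  apply: (big_ind (fun x => x < s)) => // [x y|j _]; first by rewrite gt_max => ->.
  by rewrite ltr_pdivrMr.
have eig_le l : eigenvalue A l -> l <= mu.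
  apply: eigenvalue_le_subinvariant => // j.
  by rewrite -ler_pdivrMr // /mu [leRHS](bigD1 j) //= le_max lexx.
rewrite /spectral_radius.
have [[l eig_l] | no_eig] := pselect ([set x | eigenvalue A x] !=set0)%classic.
  by apply: le_lt_trans mu_lt; apply: ge_sup => [|x /eig_le]; first by exists l.
suff -> : [set x | eigenvalue A x]%classic = set0 by rewrite sup0.
by apply/seteqP; split=> // x eig_x; apply: no_eig; exists x.
Qed.

Lemma adj_spectral_radius_lt (R : realType) n (e : nat -> nat -> bool) (w : nat -> R) s :
  0 < s -> (forall i : 'I_n, 0 < w i) ->
  (forall j : 'I_n, \sum_(i < n) w i * (e i j)%:R < s * w j) ->
  spectral_radius (adj_mx R n e) < s.
Proof.
move=> s_gt0 w_gt0 subinv.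
apply: (spectral_radius_lt_subinvariant (w := w \o val)) => // [i j | j].
  by rewrite mxE ler0n.
by under eq_bigr do rewrite mxE; apply: subinv.
Qed.

Lemma sum_mul_interval (R : nzRingType) (w : nat -> R) n l m x :
  (l + m <= n)%N -> (forall i, (l <= i < l + m)%N -> w i = x) ->
  \sum_(i < n) w i * ((l <= i < l + m)%N : nat)%:R = x * m%:R.
Proof.
move=> lmn wE.
rewrite mulr_natr -[m in RHS](addKn l) -sumr_const_nat -(eq_big_nat _ _ wE).
rewrite (big_nat_widen _ _ _ _ _ lmn) big_geq_mkord [RHS]big_mkcond /=.
by apply: eq_bigr => i _; rewrite andbC; case: ifP; rewrite ?mulr1 ?mulr0.
Qed.

Lemma sum_mul_two_intervals (R : nzRingType) (w : nat -> R) (P : pred nat) n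
    l1 m1 x1 l2 m2 x2 :
  (l1 + m1 <= l2)%N -> (l2 + m2 <= n)%N ->
  (forall i, P i = (l1 <= i < l1 + m1) || (l2 <= i < l2 + m2))%N ->
  (forall i, l1 <= i < l1 + m1 -> w i = x1)%N ->
  (forall i, l2 <= i < l2 + m2 -> w i = x2)%N ->
  \sum_(i < n) w i * (P i)%:R = x1 * m1%:R + x2 * m2%:R.
Proof.
move=> disj l2n PE w1 w2; have l1n : (l1 + m1 <= n)%N by lia.
rewrite -(sum_mul_interval l1n w1) -(sum_mul_interval l2n w2) -big_split /=.
by apply: eq_bigr => i _; rewrite PE -mulrDr -natrD; congr (_ * _%:R); lia.
Qed.

Definition blockw (R : Type) (p1 p2 p3 : nat) (x0 x1 x2 x3 : R) (i : nat) : R :=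
  if (i < p1)%N then x0 else if (i < p2)%N then x1 else if (i < p3)%N then x2 else x3.

Lemma blockw_gt0 (R : numDomainType) p1 p2 p3 (x0 x1 x2 x3 : R) i :
  0 < x0 -> 0 < x1 -> 0 < x2 -> 0 < x3 -> 0 < blockw p1 p2 p3 x0 x1 x2 x3 i.
Proof. by move=> *; rewrite /blockw; repeat case: ifP. Qed.

Section GluedNeighbourhoods.
Variables (a k c : nat).

Lemma glued_edge_part2 i j : (j < 2)%N ->
  glued_edge a k c i j =
  (2 <= i < a + 2)%N || (j == c) && (a + 2 <= i < a + 2 * k + 2)%N.
Proof.
move=> j_lt2; have j_geaF : (a + 2 <= j)%N = false by lia.
by rewrite /glued_edge /K2a_arc /Fk_arc j_lt2 j_geaF (leqNgt 2 j) j_lt2 /= !andbF !orbF.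
Qed.

Lemma glued_edge_parta i j : (2 <= j < a + 2)%N ->
  glued_edge a k c i j = (i < 2)%N || (j == c) && (a + 2 <= i < a + 2 * k + 2)%N.
Proof.
case/andP=> j_ge2 j_lta; have j_lt2F : (j < 2)%N = false by rewrite ltnNge j_ge2.
have j_geaF : (a + 2 <= j)%N = false by rewrite leqNgt j_lta.
by rewrite /glued_edge /K2a_arc /Fk_arc j_lt2F j_ge2 j_geaF /= j_lta !andbF !andbT !orbF.
Qed.

Lemma glued_edge_leaf j :
  (c < a + 2)%N -> (a + 2 <= j)%N -> (j < a + 2 * k + 2)%N ->
  exists2 p, (a + 2 <= p < a + 2 * k + 2)%N &
    forall i, glued_edge a k c i j = (i == c) || (i == p).
Proof.
move=> c_lt j_gea j_lt.
have j_lt2F : (j < 2)%N = false by lia.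
have j_ltaF : (j < a + 2)%N = false by lia.
have j_eqcF : (j == c) = false by lia.
pose p := if odd (j - a) then (j - 1)%N else (j + 1)%N.
have p_leaf : (a + 2 <= p < a + 2 * k + 2)%N by rewrite /p; case: ifP; lia.
exists p => // i.
have pairE : [&& (a + 2 <= i < a + 2 * k + 2)%N, i != j
             & (i - (a + 2))./2 == (j - (a + 2))./2] = (i == p).
  by rewrite /p; case: ifP => j_odd; apply/idP/idP; lia.
rewrite /glued_edge /K2a_arc /Fk_arc j_lt2F j_ltaF j_eqcF j_gea j_lt /= !andbF andbT.
by rewrite pairE [j == i]eq_sym [(j - _)./2 == _]eq_sym pairE -orbA orbb.
Qed.

End GluedNeighbourhoods.

(* Rows of the quotient matrix of [K_{2,a} • F_k] on the classes [{0,1}], [{2}],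
   [{3,...,a+1}] and the leaves, applied to the test vector [(2a+3, 4s, 2s, 8)]. *)
Lemma bullet_quotient_subinvariant (R : realFieldType) (A K s : R) :
  2 <= A -> 1 <= K -> 0 < s -> s ^+ 2 = 2 * A + 4 * K ->
  [/\ 4 * s + 2 * s * (A - 1) < s * (2 * A + 3),
      (2 * A + 3) * 2 + 8 * (2 * K) < s * (4 * s),
      (2 * A + 3) * 2 < s * (2 * s)
    & 4 * s + 8 < s * 8].
Proof. by move=> A_ge2 K_ge1 s_gt0 s_sqr; split; nra. Qed.

(* Rows of the quotient matrix of [K_{2,a} * F_k] on the classes [{0}], [{1}],
   [{2,...,a+1}] and the leaves, applied to the test vector
   [(s(2a+4k), s(2a+2k), 4a+7k, 4a+8k)]. *)
Lemma star_quotient_subinvariant (R : realFieldType) (A K s : R) :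
  2 <= A -> 1 <= K -> 0 < s -> s ^+ 2 = 2 * A + 4 * K ->
  [/\ (4 * A + 7 * K) * A + (4 * A + 8 * K) * (2 * K) < s * (s * (2 * A + 4 * K)),
      (4 * A + 7 * K) * A < s * (s * (2 * A + 2 * K)),
      s * (2 * A + 4 * K) + s * (2 * A + 2 * K) < s * (4 * A + 7 * K)
    & s * (2 * A + 4 * K) + (4 * A + 8 * K) < s * (4 * A + 8 * K)].
Proof. by move=> A_ge2 K_ge1 s_gt0 s_sqr; split; nra. Qed.

Local Ltac blockw_eval := rewrite /blockw; do !case: ifP => ? //; exfalso; lia.

Section Subinvariance.
Variables (R : realFieldType) (a k : nat) (s : R).
Hypotheses (a_ge2 : (2 <= a)%N) (k_ge1 : (1 <= k)%N) (s_gt0 : 0 < s)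
  (s_sqr : s ^+ 2 = 2 * a%:R + 4 * k%:R).
Local Notation n := (a + 2 * k + 2)%N.

Let A_ge2 : 2 <= a%:R :> R. Proof. by rewrite ler_nat. Qed.
Let K_ge1 : 1 <= k%:R :> R. Proof. by rewrite ler1n. Qed.

Local Notation bullet_w := (blockw 2 3 (a + 2) (2 * a%:R + 3) (4 * s) (2 * s) 8).
Local Notation bullet_ineqs := (bullet_quotient_subinvariant A_ge2 K_ge1 s_gt0 s_sqr).

Lemma bullet_weight_gt0 i : 0 < bullet_w i.
Proof. by apply: blockw_gt0; rewrite ?(addr_gt0, mulr_gt0, ltr0n, ltnW a_ge2). Qed.

Lemma bullet_subinvariant (j : 'I_n) :
  \sum_(i < n) bullet_w i * (bullet_edge a k i j)%:R < s * bullet_w j.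
Proof.
have j_lt := ltn_ord j.
case: (ltnP j 2) => [j_lt2|j_ge2].
  have -> : bullet_w j = 2 * a%:R + 3 by blockw_eval.
  rewrite (@sum_mul_two_intervals _ bullet_w (bullet_edge a k ^~ j) _
             2 1 (4 * s) 3 (a - 1) (2 * s));
    try lia; try by move=> ? ?; blockw_eval.
  - by case: bullet_ineqs => ? _ _ _; rewrite natrB ?(ltnW a_ge2) //; lra.
  - by move=> i; rewrite /bullet_edge glued_edge_part2 //; apply/idP/idP; lia.
case: (ltnP j 3) => [j_lt3|j_ge3].
  have -> : bullet_w j = 4 * s by blockw_eval.
  rewrite (@sum_mul_two_intervals _ bullet_w (bullet_edge a k ^~ j) _
             0 2 (2 * a%:R + 3) (a + 2) (2 * k) 8);
    try lia; try by move=> ? ?; blockw_eval.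
  - by case: bullet_ineqs => _ ? _ _; rewrite natrM; lra.
  - by move=> i; rewrite /bullet_edge glued_edge_parta; apply/idP/idP; lia.
case: (ltnP j (a + 2)) => [j_lta|j_gea].
  have -> : bullet_w j = 2 * s by blockw_eval.
  rewrite (@sum_mul_two_intervals _ bullet_w (bullet_edge a k ^~ j) _
             0 2 (2 * a%:R + 3) 2 0 (4 * s));
    try lia; try by move=> ? ?; blockw_eval.
  - by case: bullet_ineqs => _ _ ? _; lra.
  - by move=> i; rewrite /bullet_edge glued_edge_parta; apply/idP/idP; lia.
have [|p p_leaf Np] := @glued_edge_leaf a k 2 j _ j_gea j_lt; first lia.
have -> : bullet_w j = 8 by blockw_eval.
rewrite (@sum_mul_two_intervals _ bullet_w (bullet_edge a k ^~ j) _
           2 1 (4 * s) p 1 8);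
  try lia; try by move=> ? ?; blockw_eval.
- by case: bullet_ineqs => _ _ _ ?; lra.
- by move=> i; rewrite /bullet_edge Np; apply/idP/idP; lia.
Qed.

Local Notation star_w := (blockw 1 2 (a + 2) (s * (2 * a%:R + 4 * k%:R))
  (s * (2 * a%:R + 2 * k%:R)) (4 * a%:R + 7 * k%:R) (4 * a%:R + 8 * k%:R)).
Local Notation star_ineqs := (star_quotient_subinvariant A_ge2 K_ge1 s_gt0 s_sqr).

Lemma star_weight_gt0 i : 0 < star_w i.
Proof. by apply: blockw_gt0; rewrite ?(addr_gt0, mulr_gt0, ltr0n, ltnW a_ge2, k_ge1). Qed.

Lemma star_subinvariant (j : 'I_n) :
  \sum_(i < n) star_w i * (star_edge a k i j)%:R < s * star_w j.
Proof.
have j_lt := ltn_ord j.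
case: (ltnP j 1) => [j_lt1|j_ge1].
  have -> : star_w j = s * (2 * a%:R + 4 * k%:R) by blockw_eval.
  rewrite (@sum_mul_two_intervals _ star_w (star_edge a k ^~ j) _
             2 a (4 * a%:R + 7 * k%:R) (a + 2) (2 * k) (4 * a%:R + 8 * k%:R));
    try lia; try by move=> ? ?; blockw_eval.
  - by case: star_ineqs => ? _ _ _; rewrite natrM; lra.
  - by move=> i; rewrite /star_edge glued_edge_part2 //; apply/idP/idP; lia.
case: (ltnP j 2) => [j_lt2|j_ge2].
  have -> : star_w j = s * (2 * a%:R + 2 * k%:R) by blockw_eval.
  rewrite (@sum_mul_two_intervals _ star_w (star_edge a k ^~ j) _
             2 a (4 * a%:R + 7 * k%:R) (a + 2) 0 (4 * a%:R + 8 * k%:R));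
    try lia; try by move=> ? ?; blockw_eval.
  - by case: star_ineqs => _ ? _ _; lra.
  - by move=> i; rewrite /star_edge glued_edge_part2 //; apply/idP/idP; lia.
case: (ltnP j (a + 2)) => [j_lta|j_gea].
  have -> : star_w j = 4 * a%:R + 7 * k%:R by blockw_eval.
  rewrite (@sum_mul_two_intervals _ star_w (star_edge a k ^~ j) _
             0 1 (s * (2 * a%:R + 4 * k%:R)) 1 1 (s * (2 * a%:R + 2 * k%:R)));
    try lia; try by move=> ? ?; blockw_eval.
  - by case: star_ineqs => _ _ ? _; lra.
  - by move=> i; rewrite /star_edge glued_edge_parta; apply/idP/idP; lia.
have [|p p_leaf Np] := @glued_edge_leaf a k 0 j _ j_gea j_lt; first lia.
have -> : star_w j = 4 * a%:R + 8 * k%:R by blockw_eval.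
rewrite (@sum_mul_two_intervals _ star_w (star_edge a k ^~ j) _
           0 1 (s * (2 * a%:R + 4 * k%:R)) p 1 (4 * a%:R + 8 * k%:R));
  try lia; try by move=> ? ?; blockw_eval.
- by case: star_ineqs => _ _ _ ?; lra.
- by move=> i; rewrite /star_edge Np; apply/idP/idP; lia.
Qed.

End Subinvariance.

Theorem lemma2p6 (R : realType) (n a : nat) :
  (6 <= n)%N -> (2 <= a)%N -> odd n = odd a ->
  let k := ((n - a - 2) %/ 2)%N in (1 <= k)%N ->
  spectral_radius (adj_mx R n (bullet_edge a k)) < Num.sqrt ((2 * n - 4)%:R) /\
  spectral_radius (adj_mx R n (star_edge a k)) < Num.sqrt ((2 * n - 4)%:R).
Proof.
move=> n_ge6 a_ge2 n_a_parity k k_ge1.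
have n_eq : n = (a + 2 * k + 2)%N by rewrite /k; lia.
clearbody k; subst n.
set s := Num.sqrt _.
have s_gt0 : 0 < s by rewrite sqrtr_gt0 ltr0n; lia.
have s_sqr : s ^+ 2 = 2 * a%:R + 4 * k%:R.
  rewrite sqr_sqrtr ?ler0n // (_ : (2 * _ - 4 = 2 * a + 4 * k)%N); last by lia.
  by rewrite natrD !natrM.
split.
- apply: (adj_spectral_radius_lt s_gt0 _ (bullet_subinvariant a_ge2 k_ge1 s_gt0 s_sqr)).
  by move=> i; apply: bullet_weight_gt0.
- apply: (adj_spectral_radius_lt s_gt0 _ (star_subinvariant a_ge2 k_ge1 s_gt0 s_sqr)).
  by move=> i; apply: star_weight_gt0.
Qed.
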